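(* Suppose $0<\lambda\le\frac12$ and $\tau>0$. There exists a universal constant $c_0\in(0,1)$ such that the following holds. Let $\mu=\frac{c_0\lambda}{\tau}$ and let $p_0:\mathbb{R}\to[0,\infty)$ be the probability density $p_0(x)=\frac\tau4$ for $|x|\le\frac1\tau$ and $p_0(x)=\frac{1}{4\tau x^2}$ for $|x|>\frac1\tau$. Let $h:\mathbb{R}\to\mathbb{C}$ be the purely imaginary function $$h(t)=\begin{cases}0,&t<-2\tau,\\-j(-t),&-2\tau\le t\le-\tau,\\ k(t),&-\tau<t<\tau,\\ j(t),&\tau\le t\le2\tau,\\0,&t>2\tau,\end{cases}$$ with $k(t)=2i\frac{1-\lambda}{\lambda}\sin(t\mu)$ and $j(t)=2i\frac{1-\lambda}{\lambda}\sin(\tau\mu)\frac{2\tau-t}{\tau}$. Define the real-valued function $\Delta=-\frac{\hat h}{2\pi}$, where $\hat h(x)=\int e^{-itx}h(t)\,dt$. Then $p_1=p_0+\Delta$ is a probability density function. *)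

From Stdlib Require Import Reals.
From Coquelicot Require Import Coquelicot.
Open Scope R_scope.

Definition cexp (z : C) : C :=
  (exp (Re z) * cos (Im z), exp (Re z) * sin (Im z)).

Definition p0F (tau x : R) : R :=
  if Rle_dec (Rabs x) (/ tau) then tau / 4 else / (4 * tau * x ^ 2).

Definition kfun (lam mu t : R) : C :=
  Cmult (0, 1) (RtoC (2 * (1 - lam) / lam * sin (t * mu))).

Definition jfun (lam tau mu t : R) : C :=
  Cmult (0, 1) (RtoC (2 * (1 - lam) / lam * sin (tau * mu) * ((2 * tau - t) / tau))).

Definition hfun (lam tau mu t : R) : C :=
  if Rlt_dec t (- (2 * tau)) then RtoC 0
  else if Rle_dec t (- tau) then Copp (jfun lam tau mu (- t))
  else if Rlt_dec t tau then kfun lam mu t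
  else if Rle_dec t (2 * tau) then jfun lam tau mu t
  else RtoC 0.

Definition fourier (f : R -> C) (x : R) : C :=
  RInt_gen (V := C_R_CompleteNormedModule)
    (fun t => Cmult (cexp (0, - (t * x))) (f t))
    (Rbar_locally m_infty) (Rbar_locally p_infty).

Definition DeltaF (lam tau mu : R) (x : R) : C :=
  Cmult (RtoC (- / (2 * PI))) (fourier (hfun lam tau mu) x).

Definition p1F (lam tau mu : R) (x : R) : C :=
  Cplus (RtoC (p0F tau x)) (DeltaF lam tau mu x).

Definition is_pdf (f : R -> R) : Prop :=
  (forall x, 0 <= f x) /\
  is_RInt_gen f (Rbar_locally m_infty) (Rbar_locally p_infty) 1.

From Stdlib Require Import Reals Lra Psatz.
From Coquelicot Require Import Coquelicot.
Open Scope R_scope.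

(* The function h is i g with g real, odd, supported in [-2 tau, 2 tau] and, for
   c0 = 1/100, bounded by 1/50.  Hence \hat h(x) = \int sin(tx) g(t) dt is real
   and odd, so Delta is real, odd, and integrates to 0, and p1 integrates to 1
   like p0.  Nonnegativity of p1 follows from |Delta| <= p0: for |x| <= 1/tau
   this is the trivial bound |\hat h| <= 4 tau sup|g|; for |x| > 1/tau,
   integrating the three pieces of g in closed form gives
   |\hat h(x)| <= 3 / (2 tau x^2), and 3/(4 pi) < 1/4. *)

Lemma Rabs_sin_le u : Rabs (sin u) <= Rabs u.
Proof.
  assert (Hpos : forall v, 0 < v -> Rabs (sin v) <= v).
  { intros v Hv. pose proof (sin_lt_x v Hv). pose proof (SIN_bound v).
    apply Rabs_le. split; [|lra].
    destruct (Rle_lt_dec 1 v); [lra|].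
    assert (0 <= sin v) by (apply sin_ge_0; pose proof PI2_3_2; lra). lra. }
  destruct (Rtotal_order u 0) as [Hu|[->|Hu]].
  - rewrite <- (Ropp_involutive u), sin_neg, !Rabs_Ropp, (Rabs_left u) by lra.
    apply Hpos; lra.
  - rewrite sin_0. lra.
  - rewrite (Rabs_right u) by lra. apply Hpos; lra.
Qed.

Lemma Rabs_sin_sub_le a b : Rabs (sin a - sin b) <= Rabs (a - b).
Proof.
  rewrite form4, !Rabs_mult, Rabs_right by lra.
  pose proof (COS_bound ((a + b) / 2)). pose proof (Rabs_sin_le ((a - b) / 2)).
  assert (Rabs (cos ((a + b) / 2)) <= 1) by (apply Rabs_le; lra).
  replace (Rabs (a - b)) with (2 * Rabs ((a - b) / 2))
    by (unfold Rdiv; rewrite Rabs_mult, (Rabs_right (/ 2)) by lra; field).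
  pose proof (Rabs_pos (cos ((a + b) / 2))). pose proof (Rabs_pos (sin ((a - b) / 2))).
  nra.
Qed.

Lemma Rabs_mult_le_compat p q P Q : Rabs p <= P -> Rabs q <= Q -> Rabs (p * q) <= P * Q.
Proof. intros. rewrite Rabs_mult. apply Rmult_le_compat; auto using Rabs_pos. Qed.

Lemma continuous_lipschitz (f : R -> R) K x :
  (forall y, Rabs (f y - f x) <= K * Rabs (y - x)) -> continuous f x.
Proof.
  intros Hf. apply filterlim_locally. intros eps.
  assert (HK : 0 < Rabs K + 1) by (pose proof (Rabs_pos K); lra).
  assert (Hd : 0 < eps / (Rabs K + 1)) by (apply Rdiv_lt_0_compat; [apply cond_pos|lra]).
  exists (mkposreal _ Hd). intros y Hy. change (Rabs (f y - f x) < eps).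
  change (Rabs (y - x) < eps / (Rabs K + 1)) in Hy.
  apply Rle_lt_trans with ((Rabs K + 1) * Rabs (y - x)).
  - eapply Rle_trans; [apply Hf|]. pose proof (Rle_abs K). pose proof (Rabs_pos (y - x)). nra.
  - apply Rmult_lt_reg_r with (/ (Rabs K + 1)); [apply Rinv_0_lt_compat; lra|].
    rewrite Rmult_comm, <- Rmult_assoc, Rinv_l, Rmult_1_l by lra. exact Hy.
Qed.

Lemma continuous_of_ex_derive (f : R -> R) x : ex_derive f x -> continuous f x.
Proof. apply (@ex_derive_continuous R_AbsRing R_NormedModule). Qed.

Lemma filterlim_at_point (f : R -> R) a : filterlim f (at_point a) (locally (f a)).
Proof. intros P HP. exact (locally_singleton _ _ HP). Qed.

Lemma is_RInt_derive_ext (f g G : R -> R) a b :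
  (forall t, Rmin a b < t < Rmax a b -> f t = g t) ->
  (forall t, Rmin a b <= t <= Rmax a b -> is_derive G t (g t)) ->
  (forall t, Rmin a b <= t <= Rmax a b -> continuous g t) ->
  is_RInt f a b (G b - G a).
Proof.
  intros Hfg HG Hg. apply (is_RInt_ext g).
  - intros t Ht. symmetry. auto.
  - apply (@is_RInt_derive R_CompleteNormedModule); auto.
Qed.

Lemma is_RInt_gen_compact_support {V : NormedModule R_AbsRing} (f : R -> V) a b l :
  (forall t, t < a \/ b < t -> f t = zero) -> is_RInt f a b l ->
  is_RInt_gen f (Rbar_locally m_infty) (Rbar_locally p_infty) l.
Proof.
  intros Hz Hab P HP.
  apply (Filter_prod _ _ _ (fun a' => a' < a) (fun b' => b < b')); [exists a; auto|exists b; auto|].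
  intros a' b' Ha Hb. exists l. split; [|exact (locally_singleton _ _ HP)].
  assert (Hzero : forall u v,
            (forall t, Rmin u v < t < Rmax u v -> f t = zero) -> is_RInt f u v zero).
  { intros u v Huv. apply (is_RInt_ext (fun _ => zero)); [intros; symmetry; auto|].
    pose proof (is_RInt_const u v (@zero V)) as K.
    rewrite (@scal_zero_r R_Ring (NormedModule.ModuleSpace R_AbsRing V)) in K. exact K. }
  rewrite <- (plus_zero_l l), <- (plus_zero_r l) at 1.
  apply (is_RInt_Chasles f a' a b'); [|apply (is_RInt_Chasles f a b b'); [exact Hab|]];
    apply Hzero; intros t Ht; rewrite Rmin_left, Rmax_right in Ht by lra; apply Hz; lra.
Qed.

Section OddFunction.
Variable f : R -> R.
Hypothesis f_odd : forall y, f (- y) = - f y.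

Lemma is_RInt_odd_sym a (I : R) : is_RInt f (- a) a I -> I = 0.
Proof.
  intros H.
  assert (Hrev : is_RInt f a (- a) I).
  { apply (is_RInt_ext (fun y => opp (f (- y)))).
    - intros y _. rewrite f_odd. unfold opp; simpl. ring.
    - apply (is_RInt_comp_opp (V := R_NormedModule)). rewrite Ropp_involutive. exact H. }
  apply (@is_RInt_unique R_CompleteNormedModule) in Hrev.
  apply (is_RInt_swap (V := R_NormedModule)), (@is_RInt_unique R_CompleteNormedModule) in H.
  rewrite Hrev in H. unfold opp in H; simpl in H. lra.
Qed.

Hypothesis f_cont : forall x, continuous f x.

Lemma ex_RInt_cont a b : ex_RInt f a b.
Proof. apply (@ex_RInt_continuous R_CompleteNormedModule). auto. Qed.

Lemma RInt_odd_opp a b : RInt f a b = RInt f (- a) (- b).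
Proof.
  apply (@is_RInt_unique R_CompleteNormedModule).
  apply (is_RInt_ext (fun y => opp (f (- y)))).
  - intros y _. rewrite f_odd. unfold opp; simpl. ring.
  - apply (is_RInt_comp_opp (V := R_NormedModule)), (@RInt_correct R_CompleteNormedModule).
    apply ex_RInt_cont.
Qed.

Variables R0 M : R.
Hypothesis R0_pos : 0 < R0.
Hypothesis f_decay : forall x, R0 <= Rabs x -> Rabs (f x) <= M / x ^ 2.

Lemma Rabs_RInt_tail_le r b : R0 <= r -> r <= b -> Rabs (RInt f r b) <= M / r.
Proof.
  intros Hr Hrb.
  assert (HI : is_RInt (fun t => M / t ^ 2) r b ((- M / b) - (- M / r))).
  { apply (is_RInt_derive_ext (fun t => M / t ^ 2) (fun t => M / t ^ 2) (fun t => - M / t));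
      [reflexivity| |];
      intros t Ht; rewrite Rmin_left, Rmax_right in Ht by lra.
    - auto_derive; [lra|]. field. lra.
    - apply continuous_of_ex_derive. auto_derive.
      repeat apply Rmult_integral_contrapositive_currified; lra. }
  eapply Rle_trans. apply abs_RInt_le; [lra|apply ex_RInt_cont].
  eapply Rle_trans. apply RInt_le with (g := fun t => M / t ^ 2).
  - exact Hrb.
  - apply (@ex_RInt_continuous R_CompleteNormedModule). intros z _.
    apply continuous_Rabs_comp. auto.
  - eexists; exact HI.
  - intros t Ht. apply f_decay. rewrite Rabs_right; lra.
  - apply (@is_RInt_unique R_CompleteNormedModule) in HI. rewrite HI.
    assert (0 <= M).
    { pose proof (f_decay R0 (Rle_abs R0)) as HR0. pose proof (Rabs_pos (f R0)).
      assert (0 < R0 ^ 2) by (apply pow_lt; lra).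
      apply Rmult_le_reg_r with (/ R0 ^ 2); [apply Rinv_0_lt_compat; lra|]. lra. }
    assert (0 <= M / b) by (apply Rdiv_le_0_compat; lra). unfold Rdiv in *. lra.
Qed.

(* Only the two tails contribute, since the integral over [-r, r] vanishes. *)
Lemma is_RInt_gen_odd_decay : is_RInt_gen f (Rbar_locally m_infty) (Rbar_locally p_infty) 0.
Proof.
  intros P [eps HP].
  assert (Heps := cond_pos eps).
  set (r := Rmax R0 (2 * M / eps) + 1).
  assert (Hr0 : R0 <= r) by (unfold r; pose proof (Rmax_l R0 (2 * M / eps)); lra).
  assert (Hreps : 2 * M < eps * r).
  { assert (2 * M / eps < r) by (unfold r; pose proof (Rmax_r R0 (2 * M / eps)); lra).
    apply Rmult_lt_compat_l with (r := eps) in H; auto.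
    unfold Rdiv in H. rewrite Rmult_comm, Rmult_assoc, Rinv_l, Rmult_1_r in H by lra. lra. }
  apply (Filter_prod _ _ _ (fun a => a < - r) (fun b => r < b)); [exists (- r); auto|exists r; auto|].
  intros a b Ha Hb. exists (RInt f a b).
  split; [apply (@RInt_correct R_CompleteNormedModule), ex_RInt_cont|].
  apply HP. change (Rabs (RInt f a b - 0) < eps). rewrite Rminus_0_r.
  assert (Hmid : RInt f (- r) r = 0).
  { apply (is_RInt_odd_sym r). apply (@RInt_correct R_CompleteNormedModule), ex_RInt_cont. }
  rewrite <- (@RInt_Chasles R_CompleteNormedModule f a (- r) b),
    <- (@RInt_Chasles R_CompleteNormedModule f (- r) r b) by apply ex_RInt_cont.
  change (Rabs (RInt f a (- r) + (RInt f (- r) r + RInt f r b)) < eps).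
  rewrite Hmid, Rplus_0_l, RInt_odd_opp, Ropp_involutive,
    <- (@opp_RInt_swap R_CompleteNormedModule) by apply ex_RInt_cont.
  pose proof (Rabs_RInt_tail_le r b Hr0 ltac:(lra)).
  pose proof (Rabs_RInt_tail_le r (- a) Hr0 ltac:(lra)).
  assert (M / r + M / r < eps).
  { apply Rmult_lt_reg_r with r; [lra|]. field_simplify; lra. }
  eapply Rle_lt_trans; [apply Rabs_triang|]. change (opp ?x) with (- x). rewrite Rabs_Ropp. lra.
Qed.

End OddFunction.

Section P0Density.
Variable tau : R.
Hypothesis tau_pos : 0 < tau.

Let P0 (t : R) : R := - / (4 * tau * t).

Lemma is_lim_P0 (s : Rbar) : s = p_infty \/ s = m_infty -> is_lim P0 s 0.
Proof.
  intros Hs.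
  assert (Hinfty : Rbar_mult (4 * tau) s = s).
  { destruct Hs; subst; simpl; destruct Rle_dec; try lra;
      destruct Rle_lt_or_eq_dec; first [reflexivity | lra]. }
  replace (Finite 0) with (Rbar_opp (Rbar_inv (Rbar_mult (4 * tau) s)))
    by (rewrite Hinfty; destruct Hs; subst; simpl; f_equal; ring).
  apply is_lim_opp, is_lim_inv.
  - apply is_lim_mult; [apply is_lim_const|apply is_lim_id|].
    destruct Hs; subst; simpl; lra.
  - rewrite Hinfty. destruct Hs; subst; discriminate.
Qed.

Lemma is_derive_P0 x : x <> 0 -> is_derive P0 x (/ (4 * tau * x ^ 2)).
Proof. intros Hx. unfold P0. auto_derive. nra. field. lra. Qed.

Lemma continuous_Derive_P0 x : x <> 0 -> continuous (Derive P0) x.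
Proof.
  intros Hx.
  apply continuous_ext_loc with (fun t => / (4 * tau * t ^ 2)).
  - assert (Hd : 0 < Rabs x) by (apply Rabs_pos_lt; auto).
    exists (mkposreal _ Hd). intros y Hy. symmetry. apply is_derive_unique, is_derive_P0.
    intros ->. change (Rabs (0 - x) < Rabs x) in Hy. rewrite Rminus_0_l, Rabs_Ropp in Hy. lra.
  - apply continuous_of_ex_derive. auto_derive.
    repeat apply Rmult_integral_contrapositive_currified; lra.
Qed.

Lemma Derive_P0_tail x : / tau <= Rabs x -> Derive P0 x = p0F tau x.
Proof.
  intros Hx. assert (Hx0 : x <> 0).
  { intros ->. rewrite Rabs_R0 in Hx. pose proof (Rinv_0_lt_compat _ tau_pos). lra. }
  rewrite (is_derive_unique _ _ _ (is_derive_P0 x Hx0)). unfold p0F.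
  destruct Rle_dec as [Hle|]; [|reflexivity].
  assert (E : x ^ 2 = / tau ^ 2)
    by (rewrite <- (pow2_abs x); replace (Rabs x) with (/ tau) by lra; field; lra).
  rewrite E. field. lra.
Qed.

Lemma is_RInt_gen_p0F_tail Fa Fb la lb : Filter Fa -> Filter Fb ->
  filter_prod Fa Fb (fun ab =>
    forall x, Rmin (fst ab) (snd ab) <= x <= Rmax (fst ab) (snd ab) -> / tau <= Rabs x) ->
  filterlim P0 Fa (locally la) -> filterlim P0 Fb (locally lb) ->
  is_RInt_gen (p0F tau) Fa Fb (lb - la).
Proof.
  intros HFa HFb Htail Hla Hlb.
  assert (Hnz : forall x, / tau <= Rabs x -> x <> 0).
  { intros x Hx ->. rewrite Rabs_R0 in Hx. pose proof (Rinv_0_lt_compat _ tau_pos). lra. }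
  apply (is_RInt_gen_ext (Derive P0)); [|apply is_RInt_gen_Derive; auto].
  all: eapply filter_imp; [|exact Htail]; intros ab Hab x Hx.
  - apply Derive_P0_tail, Hab. lra.
  - eexists. apply is_derive_P0, Hnz, Hab, Hx.
  - apply continuous_Derive_P0, Hnz, Hab, Hx.
Qed.

Lemma is_RInt_gen_p0F : is_RInt_gen (p0F tau) (Rbar_locally m_infty) (Rbar_locally p_infty) 1.
Proof.
  assert (Hi : 0 < / tau) by (apply Rinv_0_lt_compat; lra).
  replace 1 with (plus (1 / 4) (plus (1 / 2) (1 / 4))) by (unfold plus; simpl; field).
  apply (is_RInt_gen_Chasles (V := R_NormedModule) _ (- / tau));
    [|apply (is_RInt_gen_Chasles (V := R_NormedModule) _ (/ tau))].
  - replace (1 / 4) with (P0 (- / tau) - 0) by (unfold P0; field; lra).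
    apply is_RInt_gen_p0F_tail; [apply Rbar_locally_filter|apply at_point_filter| | |].
    + exists (fun a => a < - / tau) (fun b => b = - / tau); [exists (- / tau); tauto|reflexivity|].
      intros a b Ha -> x Hx. simpl in Hx. rewrite Rmin_left, Rmax_right in Hx by lra.
      rewrite Rabs_left; lra.
    + apply (is_lim_P0 m_infty). auto.
    + apply filterlim_at_point.
  - apply is_RInt_gen_at_point, (is_RInt_ext (fun _ => tau / 4)).
    + intros x Hx. rewrite Rmin_left, Rmax_right in Hx by lra. unfold p0F.
      destruct Rle_dec as [|n]; [reflexivity|]. exfalso; apply n, Rabs_le; lra.
    + replace (1 / 2) with (scal (/ tau - - / tau) (tau / 4))
        by (unfold scal; simpl; unfold mult; simpl; field; lra).
      apply (is_RInt_const (V := R_NormedModule)).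
  - replace (1 / 4) with (0 - P0 (/ tau)) by (unfold P0; field; lra).
    apply is_RInt_gen_p0F_tail; [apply at_point_filter|apply Rbar_locally_filter| | |].
    + exists (fun a => a = / tau) (fun b => / tau < b); [reflexivity|exists (/ tau); tauto|].
      intros a b -> Hb x Hx. simpl in Hx. rewrite Rmin_left, Rmax_right in Hx by lra.
      rewrite Rabs_right; lra.
    + apply filterlim_at_point.
    + apply (is_lim_P0 p_infty). auto.
Qed.

End P0Density.

Section ImaginaryProfile.
Variables lam tau mu : R.
Hypothesis tau_pos : 0 < tau.

(* The paper's k, j and h are i kamp, i jamp and i himag. *)
Definition amp : R := 2 * (1 - lam) / lam.
Definition kamp (t : R) : R := amp * sin (t * mu).
Definition jamp (t : R) : R := amp * sin (tau * mu) * ((2 * tau - t) / tau).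

Definition himag (t : R) : R :=
  if Rlt_dec t (- (2 * tau)) then 0
  else if Rle_dec t (- tau) then - jamp (- t)
  else if Rlt_dec t tau then kamp t
  else if Rle_dec t (2 * tau) then jamp t
  else 0.

Lemma hfun_imag t : hfun lam tau mu t = (0, himag t).
Proof.
  unfold hfun, himag, kfun, jfun, Copp, Cmult, RtoC; simpl.
  repeat (destruct Rlt_dec || destruct Rle_dec); f_equal; unfold kamp, jamp, amp; ring.
Qed.

Ltac himag_cases :=
  unfold himag; repeat (destruct Rlt_dec || destruct Rle_dec); first [reflexivity | lra].

Lemma himag_outside t : t < - (2 * tau) \/ 2 * tau < t -> himag t = 0.
Proof. intros. himag_cases. Qed.

Lemma himag_left t : - (2 * tau) <= t <= - tau -> himag t = - jamp (- t).
Proof. intros. himag_cases. Qed.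

Lemma himag_mid t : - tau < t < tau -> himag t = kamp t.
Proof. intros. himag_cases. Qed.

Lemma himag_right t : tau <= t <= 2 * tau -> himag t = jamp t.
Proof. intros. himag_cases. Qed.

Lemma himag_odd t : himag (- t) = - himag t.
Proof.
  destruct (Rlt_or_le t (- (2 * tau))) as [H1|H1];
  [|destruct (Rle_or_lt t (- tau)) as [H2|H2];
  [|destruct (Rlt_or_le t tau) as [H3|H3];
  [|destruct (Rle_or_lt t (2 * tau)) as [H4|H4]]]].
  - rewrite !himag_outside by lra. ring.
  - rewrite himag_right, himag_left by lra. ring.
  - rewrite !himag_mid by lra. unfold kamp.
    rewrite Ropp_mult_distr_l_reverse, sin_neg. ring.
  - rewrite himag_left, himag_right, Ropp_involutive by lra. reflexivity.
  - rewrite !himag_outside by lra. ring.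
Qed.

Lemma ex_RInt_mul_himag (phi : R -> R) : (forall t, continuous phi t) ->
  ex_RInt (fun t => phi t * himag t) (- (2 * tau)) (2 * tau).
Proof.
  intros Hphi.
  assert (Hpiece : forall (g : R -> R) a b,
            (forall t, Rmin a b < t < Rmax a b -> g t = himag t) ->
            (forall t, continuous g t) -> ex_RInt (fun t => phi t * himag t) a b).
  { intros g a b Hg Hc. apply (ex_RInt_ext (fun t => phi t * g t)).
    - intros t Ht. rewrite Hg by exact Ht. reflexivity.
    - apply (@ex_RInt_continuous R_CompleteNormedModule). intros t _.
      apply (continuous_mult (K := R_AbsRing) phi g); auto. }
  apply (ex_RInt_Chasles _ _ (- tau)); [|apply (ex_RInt_Chasles _ _ tau)].
  - apply (Hpiece (fun t => - jamp (- t))); intros t; [intros Ht|].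
    + rewrite Rmin_left, Rmax_right in Ht by lra. rewrite himag_left by lra. reflexivity.
    + apply continuous_of_ex_derive. unfold jamp. auto_derive. lra.
  - apply (Hpiece kamp); intros t; [intros Ht|].
    + rewrite Rmin_left, Rmax_right in Ht by lra. rewrite himag_mid by lra. reflexivity.
    + apply continuous_of_ex_derive. unfold kamp. auto_derive. auto.
  - apply (Hpiece jamp); intros t; [intros Ht|].
    + rewrite Rmin_left, Rmax_right in Ht by lra. rewrite himag_right by lra. reflexivity.
    + apply continuous_of_ex_derive. unfold jamp. auto_derive. lra.
Qed.

Definition hhat (x : R) : R := RInt (fun t => sin (t * x) * himag t) (- (2 * tau)) (2 * tau).

Lemma continuous_sin_mul x t : continuous (fun t => sin (t * x)) t.
Proof. apply continuous_of_ex_derive. auto_derive. auto. Qed.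

Lemma continuous_cos_mul x t : continuous (fun t => cos (t * x)) t.
Proof. apply continuous_of_ex_derive. auto_derive. auto. Qed.

Lemma cexp_mul_imag x t g :
  Cmult (cexp (0, - (t * x))) (0, g) = (sin (t * x) * g, cos (t * x) * g).
Proof. unfold cexp, Cmult; simpl. rewrite exp_0, sin_neg, cos_neg. f_equal; ring. Qed.

(* The cosine part of the transform vanishes because [himag] is odd. *)
Lemma fourier_hfun x : fourier (hfun lam tau mu) x = (hhat x, 0).
Proof.
  unfold fourier.
  apply (@is_RInt_gen_unique C_R_CompleteNormedModule _ _
           (Proper_StrongProper _ (Rbar_locally_filter _))
           (Proper_StrongProper _ (Rbar_locally_filter _))).
  apply (is_RInt_gen_compact_support (V := C_R_NormedModule) _ (- (2 * tau)) (2 * tau)).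
  - intros t Ht. rewrite hfun_imag, himag_outside by lra.
    rewrite cexp_mul_imag, !Rmult_0_r. reflexivity.
  - apply (is_RInt_ext (fun t => (sin (t * x) * himag t, cos (t * x) * himag t))).
    { intros t _. rewrite hfun_imag, cexp_mul_imag. reflexivity. }
    apply (is_RInt_fct_extend_pair (U := R_NormedModule) (V := R_NormedModule)); simpl.
    + apply (@RInt_correct R_CompleteNormedModule), ex_RInt_mul_himag, continuous_sin_mul.
    + assert (Hcos := ex_RInt_mul_himag _ (continuous_cos_mul x)).
      apply (@RInt_correct R_CompleteNormedModule) in Hcos.
      assert (Hodd : forall y, cos (- y * x) * himag (- y) = - (cos (y * x) * himag y)).
      { intros y. rewrite himag_odd, Ropp_mult_distr_l_reverse, cos_neg. ring. }
      rewrite (is_RInt_odd_sym _ Hodd _ _ Hcos) in Hcos. exact Hcos.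
Qed.

Lemma hhat_odd x : hhat (- x) = - hhat x.
Proof.
  unfold hhat. rewrite <- (@RInt_opp R_CompleteNormedModule)
    by apply ex_RInt_mul_himag, continuous_sin_mul.
  apply RInt_ext. intros t _. unfold opp; simpl.
  rewrite Ropp_mult_distr_r_reverse, sin_neg. ring.
Qed.

Lemma hhat_closed x : x <> 0 -> x ^ 2 - mu ^ 2 <> 0 ->
  hhat x = 2 * amp * mu * sin (tau * x) * cos (tau * mu) / (x ^ 2 - mu ^ 2)
         - 2 * amp * sin (tau * mu) * mu ^ 2 * cos (tau * x) / (x * (x ^ 2 - mu ^ 2))
         + 2 * amp * sin (tau * mu) * (sin (tau * x) - sin (2 * tau * x)) / (tau * x ^ 2).
Proof.
  intros Hx Hxm.
  pose (Fl t := - (amp * sin (tau * mu) / tau)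
                * (- (2 * tau + t) * cos (t * x) / x + sin (t * x) / x ^ 2)).
  pose (Fm t := amp * ((mu * sin (t * x) * cos (t * mu) - x * cos (t * x) * sin (t * mu))
                       / (x ^ 2 - mu ^ 2))).
  pose (Fr t := amp * sin (tau * mu) / tau
                * (- (2 * tau - t) * cos (t * x) / x - sin (t * x) / x ^ 2)).
  apply (@is_RInt_unique R_CompleteNormedModule).
  replace (2 * amp * mu * sin (tau * x) * cos (tau * mu) / (x ^ 2 - mu ^ 2)
         - 2 * amp * sin (tau * mu) * mu ^ 2 * cos (tau * x) / (x * (x ^ 2 - mu ^ 2))
         + 2 * amp * sin (tau * mu) * (sin (tau * x) - sin (2 * tau * x)) / (tau * x ^ 2))
    with (plus (Fl (- tau) - Fl (- (2 * tau)))
               (plus (Fm tau - Fm (- tau)) (Fr (2 * tau) - Fr tau))).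
  2:{ unfold plus, Fl, Fm, Fr; simpl. rewrite !Ropp_mult_distr_l_reverse, !sin_neg, !cos_neg.
      field. repeat split; lra. }
  apply (is_RInt_Chasles (V := R_NormedModule) _ _ (- tau));
    [|apply (is_RInt_Chasles (V := R_NormedModule) _ _ tau)].
  - apply (is_RInt_derive_ext _ (fun t => sin (t * x) * - jamp (- t))); intros t Ht;
      rewrite ?Rmin_left, ?Rmax_right in Ht by lra.
    + rewrite himag_left by lra. reflexivity.
    + unfold Fl, jamp. auto_derive; [auto|]. field. lra.
    + apply continuous_of_ex_derive. unfold jamp. auto_derive. lra.
  - apply (is_RInt_derive_ext _ (fun t => sin (t * x) * kamp t)); intros t Ht;
      rewrite ?Rmin_left, ?Rmax_right in Ht by lra.
    + rewrite himag_mid by lra. reflexivity.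
    + unfold Fm, kamp. auto_derive; [auto|]. field. lra.
    + apply continuous_of_ex_derive. unfold kamp. auto_derive. auto.
  - apply (is_RInt_derive_ext _ (fun t => sin (t * x) * jamp t)); intros t Ht;
      rewrite ?Rmin_left, ?Rmax_right in Ht by lra.
    + rewrite himag_right by lra. reflexivity.
    + unfold Fr, jamp. auto_derive; [auto|]. field. lra.
    + apply continuous_of_ex_derive. unfold jamp. auto_derive. lra.
Qed.

Hypothesis lam_range : 0 < lam <= 1 / 2.
Hypothesis tau_mu : tau * mu = lam / 100.

Lemma mu_pos : 0 < mu.
Proof. nra. Qed.

Lemma amp_tau_mu : 0 <= amp * (tau * mu) <= / 50.
Proof.
  unfold amp. rewrite tau_mu.
  replace (2 * (1 - lam) / lam * (lam / 100)) with ((1 - lam) / 50) by (field; lra). lra.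
Qed.

Lemma Rabs_amp_sin_le u : Rabs u <= tau * mu -> Rabs (amp * sin u) <= / 50.
Proof.
  intros Hu. pose proof amp_tau_mu. pose proof (Rabs_sin_le u).
  assert (0 <= amp) by (unfold amp; apply Rdiv_le_0_compat; lra).
  rewrite Rabs_mult, (Rabs_right amp) by lra. pose proof (Rabs_pos (sin u)). nra.
Qed.

Lemma Rabs_himag_le t : Rabs (himag t) <= / 50.
Proof.
  pose proof mu_pos.
  assert (Hs : Rabs (amp * sin (tau * mu)) <= / 50)
    by (apply Rabs_amp_sin_le; rewrite Rabs_right; nra).
  assert (Hj : forall u, 0 <= (2 * tau - u) / tau <= 1 -> Rabs (jamp u) <= / 50).
  { intros u Hu. unfold jamp. rewrite Rabs_mult, (Rabs_right ((2 * tau - u) / tau)) by lra.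
    pose proof (Rabs_pos (amp * sin (tau * mu))). nra. }
  assert (Hfrac : forall u, tau <= u <= 2 * tau -> 0 <= (2 * tau - u) / tau <= 1).
  { intros u Hu. split; [apply Rdiv_le_0_compat; lra|].
    apply Rmult_le_reg_r with tau; [lra|]. unfold Rdiv. rewrite Rmult_assoc, Rinv_l; lra. }
  destruct (Rlt_or_le t (- (2 * tau))) as [H1|H1];
  [|destruct (Rle_or_lt t (- tau)) as [H2|H2];
  [|destruct (Rlt_or_le t tau) as [H3|H3];
  [|destruct (Rle_or_lt t (2 * tau)) as [H4|H4]]]].
  - rewrite himag_outside, Rabs_R0 by lra. lra.
  - rewrite himag_left, Rabs_Ropp by lra. apply Hj, Hfrac. lra.
  - rewrite himag_mid by lra. apply Rabs_amp_sin_le.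
    rewrite Rabs_mult, (Rabs_right mu) by lra. apply Rmult_le_compat_r; [lra|]. apply Rabs_le; lra.
  - rewrite himag_right by lra. apply Hj, Hfrac. lra.
  - rewrite himag_outside, Rabs_R0 by lra. lra.
Qed.

Lemma Rabs_hhat_le x : Rabs (hhat x) <= 4 * tau / 50.
Proof.
  replace (4 * tau / 50) with ((2 * tau - - (2 * tau)) * / 50) by field.
  apply abs_RInt_le_const; [lra|apply ex_RInt_mul_himag, continuous_sin_mul|].
  intros t _. rewrite Rabs_mult. pose proof (Rabs_himag_le t).
  assert (Rabs (sin (t * x)) <= 1) by (apply Rabs_le, SIN_bound).
  pose proof (Rabs_pos (sin (t * x))). pose proof (Rabs_pos (himag t)). nra.
Qed.

Lemma Rabs_hhat_sub_le x y : Rabs (hhat y - hhat x) <= 8 * tau ^ 2 / 50 * Rabs (y - x).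
Proof.
  assert (E : hhat y - hhat x =
              RInt (fun t => (sin (t * y) - sin (t * x)) * himag t) (- (2 * tau)) (2 * tau)).
  { unfold hhat.
    rewrite <- (@RInt_minus R_CompleteNormedModule) by apply ex_RInt_mul_himag, continuous_sin_mul.
    apply RInt_ext. intros t _. unfold minus, plus, opp; simpl. ring. }
  rewrite E.
  replace (8 * tau ^ 2 / 50 * Rabs (y - x))
    with ((2 * tau - - (2 * tau)) * (2 * tau * Rabs (y - x) * / 50)) by field.
  apply abs_RInt_le_const; [lra| |].
  - apply ex_RInt_mul_himag. intros t.
    apply (continuous_minus (V := R_NormedModule)); apply continuous_sin_mul.
  - intros t Ht. apply Rabs_mult_le_compat; [|apply Rabs_himag_le].
    eapply Rle_trans; [apply Rabs_sin_sub_le|].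
    replace (t * y - t * x) with (t * (y - x)) by ring. rewrite Rabs_mult.
    apply Rmult_le_compat_r; [apply Rabs_pos|]. apply Rabs_le; lra.
Qed.

Lemma large_frequency_ratios x : / tau < Rabs x ->
  0 < x ^ 2 - mu ^ 2 /\
  Rabs (x ^ 2 / (x ^ 2 - mu ^ 2)) <= 2 /\ Rabs (mu * x / (x ^ 2 - mu ^ 2)) <= 1.
Proof.
  intros Hx. pose proof mu_pos.
  assert (Hx2 : x ^ 2 = Rabs x * Rabs x) by (rewrite <- pow2_abs; ring).
  assert (Htx : 1 < tau * Rabs x).
  { apply Rmult_lt_compat_l with (r := tau) in Hx; [|lra]. rewrite Rinv_r in Hx; lra. }
  assert (Hmx : 2 * mu <= Rabs x) by nra.
  set (K := x ^ 2 - mu ^ 2).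
  assert (HK : x ^ 2 <= 2 * K /\ mu * Rabs x <= K) by (unfold K; rewrite Hx2; nra).
  assert (HK0 : 0 < K) by (pose proof (Rabs_pos x); nra).
  unfold Rdiv. rewrite !Rabs_mult, (Rabs_right (x ^ 2)), (Rabs_right mu), (Rabs_right (/ K))
    by (apply Rle_ge; try apply Rlt_le, Rinv_0_lt_compat; nra).
  split; [lra|split]; apply Rmult_le_reg_r with K; try lra; rewrite Rmult_assoc, Rinv_l; lra.
Qed.

Lemma Rabs_hhat_large x : / tau < Rabs x -> Rabs (hhat x) * (tau * x ^ 2) <= 3 / 2.
Proof.
  intros Hx. pose proof mu_pos. pose proof amp_tau_mu.
  destruct (large_frequency_ratios x Hx) as [HK0 [Hr1 Hr2]].
  set (K := x ^ 2 - mu ^ 2) in *.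
  assert (Hx0 : x <> 0).
  { intros ->. rewrite Rabs_R0 in Hx. pose proof (Rinv_0_lt_compat tau tau_pos). lra. }
  assert (Has : Rabs (amp * sin (tau * mu)) <= / 50)
    by (apply Rabs_amp_sin_le; rewrite Rabs_right; nra).
  assert (Hsin : forall u, Rabs (sin u) <= 1) by (intros; apply Rabs_le, SIN_bound).
  assert (Hcos : forall u, Rabs (cos u) <= 1) by (intros; apply Rabs_le, COS_bound).
  assert (E : hhat x * (tau * x ^ 2) =
     2 * (amp * (tau * mu)) * (sin (tau * x) * cos (tau * mu)) * (x ^ 2 / K)
     - 2 * (amp * sin (tau * mu)) * (tau * mu) * (cos (tau * x) * (mu * x / K))
     + 2 * (amp * sin (tau * mu)) * (sin (tau * x) - sin (2 * tau * x))).
  { rewrite hhat_closed by (fold K; lra). unfold K in *. field. repeat split; lra. }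
  rewrite <- (Rabs_right (tau * x ^ 2)) by (apply Rle_ge, Rmult_le_pos; [lra|apply pow2_ge_0]).
  rewrite <- Rabs_mult, E.
  assert (B1 : Rabs (2 * (amp * (tau * mu)) * (sin (tau * x) * cos (tau * mu)) * (x ^ 2 / K))
               <= 2 * / 50 * (1 * 1) * 2).
  { repeat apply Rabs_mult_le_compat; auto; rewrite Rabs_right; lra. }
  assert (B2 : Rabs (2 * (amp * sin (tau * mu)) * (tau * mu) * (cos (tau * x) * (mu * x / K)))
               <= 2 * / 50 * 1 * (1 * 1)).
  { repeat apply Rabs_mult_le_compat; auto; rewrite Rabs_right; nra. }
  assert (B3 : Rabs (2 * (amp * sin (tau * mu)) * (sin (tau * x) - sin (2 * tau * x)))
               <= 2 * / 50 * 2).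
  { repeat apply Rabs_mult_le_compat; auto; [rewrite Rabs_right; lra|].
    eapply Rle_trans; [apply Rabs_triang|]. rewrite Rabs_Ropp.
    pose proof (Hsin (tau * x)). pose proof (Hsin (2 * tau * x)). lra. }
  unfold Rminus at 1. eapply Rle_trans; [apply Rabs_triang|].
  eapply Rle_trans; [apply Rplus_le_compat_r, Rabs_triang|]. rewrite Rabs_Ropp. lra.
Qed.

Definition delta (x : R) : R := - / (2 * PI) * hhat x.

Lemma DeltaF_delta x : DeltaF lam tau mu x = (delta x, 0).
Proof. unfold DeltaF, delta. rewrite fourier_hfun. unfold Cmult, RtoC; simpl. f_equal; ring. Qed.

Lemma Rabs_delta x : Rabs (delta x) = Rabs (hhat x) / (2 * PI).
Proof.
  pose proof PI_RGT_0. unfold delta, Rdiv.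
  rewrite Rabs_mult, Rabs_Ropp, Rabs_right by (apply Rle_ge, Rlt_le, Rinv_0_lt_compat; lra). ring.
Qed.

Lemma Rabs_delta_le_p0F x : Rabs (delta x) <= p0F tau x.
Proof.
  pose proof PI2_3_2. rewrite Rabs_delta. unfold p0F.
  apply Rmult_le_reg_r with (2 * PI); [lra|]. unfold Rdiv. rewrite Rmult_assoc, Rinv_l, Rmult_1_r by lra.
  destruct Rle_dec as [Hsmall|Hlarge].
  - pose proof (Rabs_hhat_le x). nra.
  - pose proof (Rabs_hhat_large x ltac:(lra)) as Hb.
    pose proof (Rinv_0_lt_compat tau tau_pos).
    assert (Hx0 : x <> 0) by (intros ->; rewrite Rabs_R0 in Hlarge; lra).
    assert (Hx2 : 0 < tau * x ^ 2) by (apply Rmult_lt_0_compat; [lra|apply pow2_gt_0; exact Hx0]).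
    apply Rmult_le_reg_r with (tau * x ^ 2); [lra|].
    replace (/ (4 * tau * x ^ 2) * (2 * PI) * (tau * x ^ 2)) with (PI / 2) by (field; split; lra). lra.
Qed.

Lemma delta_odd x : delta (- x) = - delta x.
Proof. unfold delta. rewrite hhat_odd. ring. Qed.

Lemma delta_continuous x : continuous delta x.
Proof.
  apply (continuous_lipschitz _ (8 * tau ^ 2 / 50)). intros y.
  pose proof PI2_3_2. pose proof (Rabs_hhat_sub_le x y).
  replace (delta y - delta x) with (- / (2 * PI) * (hhat y - hhat x)) by (unfold delta; ring).
  rewrite Rabs_mult, Rabs_Ropp, Rabs_right by (apply Rle_ge, Rlt_le, Rinv_0_lt_compat; lra).
  assert (/ (2 * PI) < 1) by (rewrite <- Rinv_1; apply Rinv_lt_contravar; lra).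
  assert (0 < / (2 * PI)) by (apply Rinv_0_lt_compat; lra).
  pose proof (Rabs_pos (hhat y - hhat x)). nra.
Qed.

Lemma Rabs_delta_decay x : 2 / tau <= Rabs x -> Rabs (delta x) <= / (4 * tau) / x ^ 2.
Proof.
  intros Hx. pose proof (Rinv_0_lt_compat tau tau_pos).
  eapply Rle_trans; [apply Rabs_delta_le_p0F|]. unfold p0F.
  destruct Rle_dec; [unfold Rdiv in Hx; lra|].
  assert (x <> 0) by (intros ->; rewrite Rabs_R0 in *; lra).
  right. field. lra.
Qed.

End ImaginaryProfile.

Theorem mainTheorem13 :
  exists c0 : R, 0 < c0 < 1 /\
    forall lam tau : R, 0 < lam <= 1 / 2 -> 0 < tau ->
      let mu := c0 * lam / tau in
      (forall x : R, Im (DeltaF lam tau mu x) = 0) /\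
      is_pdf (fun x => Re (p1F lam tau mu x)).
Proof.
  exists (1 / 100). split; [lra|].
  intros lam tau Hlam Htau mu.
  assert (Hmu : tau * mu = lam / 100) by (unfold mu; field; lra).
  clearbody mu.
  assert (Hp1 : forall x, Re (p1F lam tau mu x) = p0F tau x + delta lam tau mu x).
  { intros x. unfold p1F. rewrite (DeltaF_delta lam tau mu Htau). reflexivity. }
  split; [intros x; rewrite (DeltaF_delta lam tau mu Htau); reflexivity|split].
  - intros x. rewrite Hp1. pose proof (Rabs_delta_le_p0F lam tau mu Htau Hlam Hmu x) as H.
    apply Rabs_le_between in H. lra.
  - apply (is_RInt_gen_ext (fun x => plus (p0F tau x) (delta lam tau mu x))).
    { apply filter_forall. intros ab x _. symmetry. apply Hp1. }
    replace 1 with (plus 1 0) by (unfold plus; simpl; ring).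
    apply (is_RInt_gen_plus (V := R_NormedModule)); [apply is_RInt_gen_p0F; exact Htau|].
    apply (is_RInt_gen_odd_decay _ (delta_odd lam tau mu Htau)
             (delta_continuous lam tau mu Htau Hlam Hmu) (2 / tau) (/ (4 * tau))).
    + apply Rdiv_lt_0_compat; lra.
    + apply Rabs_delta_decay; assumption.
Qed.
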